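(* Fix any total budget $\mathrm{TB}\in\mathbb N_0$. For every integer $n\in\mathbb Z$, the integer game form $n$ satisfies $n=\{n-1\mid n+1\}$, where $n-1$ and $n+1$ denote the corresponding integer game forms.
   Context: Game forms are defined recursively: $G=\{G^{\mathcal L}\mid G^{\mathcal R}\}$ with finite sets of Left and Right options, and finite birthday. Integer game forms: $0=\{\varnothing\mid\varnothing\}$; for $n\in\mathbb N$, $n=\{n-1\mid\varnothing\}$ and $-n=\bar n=\{\varnothing\mid -(n-1)\}$, where the conjugate is $\bar G=\{\overline{G^{\mathcal R}}\mid\overline{G^{\mathcal L}}\}$. The budget set for total budget $\mathrm{TB}$ is $\mathcal B=\{0,\dots,\mathrm{TB},\hat 0,\dots,\widehat{\mathrm{TB}}\}$: state $p$ (resp. $\hat p$) means Left holds $p$ dollars and Right holds $\mathrm{TB}-p$, and Right (resp. Left) holds the tie-breaking marker. Play of $(G,\tilde p)$: at every position (terminal ones included) both players bid simultaneously, Left $\ell\in\{0,\dots,p\}$, Right $r\in\{0,\dots,\mathrm{TB}-p\}$. If Left holds the marker (state $\hat p$): if $\ell>r$ Left moves to $(G^L,\widehat{p-\ell})$, or, including the marker (allowed when $\ell\ge r$), to $(G^L,p-\ell)$; if $\ell=r$ Left wins, the marker passes to Right, play continues at $(G^L,p-\ell)$; if $\ell<r$ Right moves to $(G^R,\widehat{p+r})$. Symmetrically when Right holds the marker (state $p$): if $r>\ell$ Right moves to $(G^R,p+r)$ or, including the marker, to $(G^R,\widehat{p+r})$; if $r=\ell$ Right wins, the marker passes to Left,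 play continues at $(G^R,\widehat{p+r})$; if $r<\ell$ Left moves to $(G^L,p-\ell)$. A player who wins a bid but has no option loses. $o(G,\tilde p)\in\{\mathrm L,\mathrm R\}$ is the winner under optimal play; $\mathrm L>\mathrm R$. Disjunctive sum $G+H=\{G^{\mathcal L}+H,G+H^{\mathcal L}\mid G^{\mathcal R}+H,G+H^{\mathcal R}\}$. $G\ge H$ means $o(G+X,\tilde p)\ge o(H+X,\tilde p)$ for all game forms $X$ and all $\tilde p\in\mathcal B$; $G=H$ means $G\ge H$ and $H\ge G$. *)

From Stdlib Require Import List Arith ZArith Bool.
Import ListNotations.

(* Game forms: finite lists of Left and Right options; finite birthday is
   automatic for an inductive type. *)
Inductive game : Type := Game : list game -> list game -> game.

Fixpoint conjg (G : game) : game :=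
  match G with Game GL GR => Game (map conjg GR) (map conjg GL) end.

Fixpoint gadd (G : game) : game -> game :=
  fix gaddG (H : game) : game :=
    match G, H with
    | Game GL GR, Game HL HR =>
        Game (map (fun g => gadd g H) GL ++ map (fun h => gaddG h) HL)
             (map (fun g => gadd g H) GR ++ map (fun h => gaddG h) HR)
    end.

Fixpoint nat_game (n : nat) : game :=
  match n with
  | O => Game [] []
  | S k => Game [nat_game k] []
  end.

Definition int_game (z : Z) : game :=
  match z with
  | Z0 => nat_game 0
  | Zpos k => nat_game (Pos.to_nat k)
  | Zneg k => conjg (nat_game (Pos.to_nat k))
  end.

(* Budget state (p, m): Left holds p dollars, Right holds TB - p;
   m = true means Left holds the tie-breaking marker (state \hat p),
   m = false means Right holds it (state p).
   outcome TB G p m = true iff Left wins (G, state) under optimal play: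
   Left has a bid l in {0..p} such that for every Right bid r in {0..TB-p}
   the continuation (chosen optimally by the winner of the bid) is won by
   Left.  A bid winner without options loses. *)
Fixpoint outcome (TB : nat) (G : game) (p : nat) (m : bool) {struct G} : bool :=
  match G with
  | Game GL GR =>
      existsb (fun l =>
        forallb (fun r =>
          if m then
            if r <? l then
              (* Left wins; may keep the marker or hand it over *)
              existsb (fun g => outcome TB g (p - l) true
                                || outcome TB g (p - l) false) GL
            else if l =? r then
              (* tie: Left wins, marker passes to Right *)
              existsb (fun g => outcome TB g (p - l) false) GL
            else
              (* Right wins the bid, pays r to Left *)
              forallb (fun g => outcome TB g (p + r) true) GR
          else
            if l <? r then
              forallb (fun g => outcome TB g (p + r) false
                                && outcome TB g (p + r) true) GR
            else if l =? r then
              forallb (fun g => outcome TB g (p + r) true) GR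
            else
              existsb (fun g => outcome TB g (p - l) false) GL)
          (seq 0 (S (TB - p))))
        (seq 0 (S p))
  end.

Definition game_ge (TB : nat) (G H : game) : Prop :=
  forall (X : game) (p : nat) (m : bool), p <= TB ->
    outcome TB (gadd H X) p m = true -> outcome TB (gadd G X) p m = true.

Definition game_eq (TB : nat) (G H : game) : Prop :=
  game_ge TB G H /\ game_ge TB H G.

From Stdlib Require Import List ZArith Lia Bool.
Import ListNotations.

(* Both inequalities are proved by copying Left's winning bids along an
   induction on the summand X.  The options of n are matched by equal options
   of {n-1 | n+1}; the only new options are the neighbours n-1 and n+1, and for
   them one uses that n+1 beats n in every sum even when it is played with more
   budget and with the tie-breaking marker moved to Left.  Extra budget is
   harmless by monotonicity.  The marker alone is not always an advantage (a
   player who wins a tie must move), but it is when Left's winning bid is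
   positive; when that bid is 0, Left bids 0 with the marker and answers the
   tie by the free move n+1 -> n, and for negative n the tie in Right's favour
   already meant Right moving -(k+1) -> -k and handing Left the marker. *)

Lemma game_ind_in (P : game -> Prop) :
  (forall GL GR, (forall g, In g GL -> P g) -> (forall g, In g GR -> P g) ->
     P (Game GL GR)) ->
  forall G, P G.
Proof.
  intros IH. fix F 1. intros [GL GR].
  apply IH; [clear GR; revert GL | clear GL; revert GR];
    fix FL 1; intros [|g gs] h Hh; [contradiction | | contradiction |];
    (destruct Hh as [<-|Hh]; [apply F | exact (FL gs h Hh)]).
Qed.

Definition lefts (G : game) : list game := let 'Game GL _ := G in GL.
Definition rights (G : game) : list game := let 'Game _ GR := G in GR.

Definition some_wins (TB : nat) (Gs : list game) (q : nat) (m : bool) : Prop :=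
  exists g, In g Gs /\ outcome TB g q m = true.

Definition all_win (TB : nat) (Gs : list game) (q : nat) (m : bool) : Prop :=
  forall g, In g Gs -> outcome TB g q m = true.

(* [winL m'] ([winR m']): Left wins after her own move (after any move of
   Right), with the marker then held by Left iff [m']; [c] compares the bids. *)
Definition bid (winL winR : bool -> Prop) (m : bool) (c : comparison) : Prop :=
  match c with
  | Gt => if m then winL true \/ winL false else winL false
  | Eq => if m then winL false else winR true
  | Lt => if m then winR true else winR false /\ winR true
  end.

Definition round (TB : nat) (GL GR : list game) (p : nat) (m : bool) (l r : nat) : bool :=
  if m then
    if r <? l then existsb (fun g => outcome TB g (p - l) true
                                     || outcome TB g (p - l) false) GL
    else if l =? r then existsb (fun g => outcome TB g (p - l) false) GL
    else forallb (fun g => outcome TB g (p + r) true) GR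
  else
    if l <? r then forallb (fun g => outcome TB g (p + r) false
                                     && outcome TB g (p + r) true) GR
    else if l =? r then forallb (fun g => outcome TB g (p + r) true) GR
    else existsb (fun g => outcome TB g (p - l) false) GL.

Lemma round_true_iff TB GL GR p m l r :
  round TB GL GR p m l r = true <->
  bid (some_wins TB GL (p - l)) (all_win TB GR (p + r)) m (l ?= r).
Proof.
  unfold round, bid, some_wins, all_win.
  rewrite (Nat.ltb_compare r l), (Nat.ltb_compare l r), Nat.eqb_compare,
    (Nat.compare_antisym l r).
  destruct (l ?= r), m; simpl; rewrite ?existsb_exists, ?forallb_forall;
    try reflexivity; try setoid_rewrite orb_true_iff; try setoid_rewrite andb_true_iff;
    firstorder.
Qed.

Lemma outcome_true_iff TB G p m :
  outcome TB G p m = true <->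
  exists l, l <= p /\ forall r, r <= TB - p ->
    bid (some_wins TB (lefts G) (p - l)) (all_win TB (rights G) (p + r)) m (l ?= r).
Proof.
  destruct G as [GL GR].
  change (outcome TB (Game GL GR) p m) with
    (existsb (fun l => forallb (fun r => round TB GL GR p m l r)
                         (seq 0 (S (TB - p)))) (seq 0 (S p))).
  rewrite existsb_exists; setoid_rewrite forallb_forall; setoid_rewrite in_seq.
  setoid_rewrite round_true_iff; simpl.
  split; intros (l & Hl & Hr); exists l; split; try lia; intros r Hr'; apply Hr; lia.
Qed.

Lemma bid_mono (winL1 winR1 winL2 winR2 : bool -> Prop) m c :
  bid winL1 winR1 m c ->
  (forall m', (m' = true -> m = true) -> winL1 m' -> winL2 m') ->
  (forall m', (m = true -> m' = true) -> winR1 m' -> winR2 m') ->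
  bid winL2 winR2 m c.
Proof. destruct m, c; simpl; intuition. Qed.

Lemma bid_take_marker (winL winR : bool -> Prop) c :
  bid winL winR false c -> (c <> Lt -> winL false) -> bid winL winR true c.
Proof. destruct c; simpl; intuition congruence. Qed.

Inductive dominates : game -> game -> Prop :=
  dominates_intro GL GR HL HR :
    (forall h, In h HL -> exists g, In g GL /\ dominates g h) ->
    (forall g, In g GR -> exists h, In h HR /\ dominates g h) ->
    dominates (Game GL GR) (Game HL HR).

Lemma dominates_refl G : dominates G G.
Proof.
  induction G as [GL GR IHL IHR] using game_ind_in.
  constructor; intros g Hg; exists g; auto.
Qed.

Lemma outcome_mono TB G H p q m :
  dominates G H -> p <= q -> outcome TB H p m = true -> outcome TB G q m = true.
Proof.
  revert H p q m; induction G as [GL GR IHL IHR] using game_ind_in.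
  intros H p q m Hdom Hpq; inversion Hdom as [? ? HL HR DL DR]; subst.
  rewrite !outcome_true_iff; intros (l & Hl & Hbid).
  exists l; split; [lia|]; intros r Hr.
  eapply bid_mono; [apply Hbid; lia | |].
  - intros m' _ (h & Hh & Hwin); destruct (DL h Hh) as (g & Hg & Hgh).
    exists g; split; [exact Hg|]; apply (IHL g Hg h (p - l)); [exact Hgh | lia | exact Hwin].
  - intros m' _ Hall g Hg; destruct (DR g Hg) as (h & Hh & Hgh).
    apply (IHR g Hg h (p + r)); [exact Hgh | lia | exact (Hall h Hh)].
Qed.

Lemma lefts_gadd G X :
  lefts (gadd G X) = map (fun g => gadd g X) (lefts G) ++ map (gadd G) (lefts X).
Proof. now destruct G, X. Qed.

Lemma rights_gadd G X :
  rights (gadd G X) = map (fun g => gadd g X) (rights G) ++ map (gadd G) (rights X).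
Proof. now destruct G, X. Qed.

Lemma in_lefts_gadd G X y :
  In y (lefts (gadd G X)) <->
  (exists g, In g (lefts G) /\ y = gadd g X) \/ (exists x, In x (lefts X) /\ y = gadd G x).
Proof. rewrite lefts_gadd, in_app_iff, !in_map_iff; firstorder. Qed.

Lemma in_rights_gadd G X y :
  In y (rights (gadd G X)) <->
  (exists g, In g (rights G) /\ y = gadd g X) \/ (exists x, In x (rights X) /\ y = gadd G x).
Proof. rewrite rights_gadd, in_app_iff, !in_map_iff; firstorder. Qed.

Lemma dominates_options G H :
  (forall h, In h (lefts H) -> exists g, In g (lefts G) /\ dominates g h) ->
  (forall g, In g (rights G) -> exists h, In h (rights H) /\ dominates g h) ->
  dominates G H.
Proof. destruct G, H; constructor; assumption. Qed.

Lemma dominates_gadd G H X : dominates G H -> dominates (gadd G X) (gadd H X).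
Proof.
  revert H X; induction G as [GL GR IHL IHR] using game_ind_in.
  intros H X Hdom; inversion Hdom as [? ? HL HR DL DR]; subst.
  induction X as [XL XR IXL IXR] using game_ind_in.
  apply dominates_options.
  - intros y [(h & Hh & ->) | (x & Hx & ->)]%in_lefts_gadd.
    + destruct (DL h Hh) as (g & Hg & Hgh).
      exists (gadd g (Game XL XR)); split; [apply in_lefts_gadd; left; now exists g | auto].
    + exists (gadd (Game GL GR) x); split; [apply in_lefts_gadd; right; now exists x | auto].
  - intros y [(g & Hg & ->) | (x & Hx & ->)]%in_rights_gadd.
    + destruct (DR g Hg) as (h & Hh & Hgh).
      exists (gadd h (Game XL XR)); split; [apply in_rights_gadd; left; now exists h | auto].
    + exists (gadd (Game HL HR) x); split; [apply in_rights_gadd; right; now exists x | auto].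
Qed.

Lemma dominates_nat_succ k : dominates (nat_game (S k)) (nat_game k).
Proof.
  induction k as [|k IH]; constructor; simpl; try tauto.
  intros h [<-|[]]; exists (nat_game (S k)); auto.
Qed.

Lemma dominates_conjg_nat_succ k : dominates (conjg (nat_game k)) (conjg (nat_game (S k))).
Proof.
  induction k as [|k IH]; constructor; simpl; try tauto.
  intros g [<-|[]]; exists (conjg (nat_game (S k))); auto.
Qed.

Lemma outcome_take_marker TB G p :
  outcome TB G p false = true ->
  outcome TB G p true = true \/ all_win TB (rights G) p true.
Proof.
  rewrite !outcome_true_iff; intros (l & Hl & Hbid).
  destruct l as [|l].
  - right. specialize (Hbid 0 (Nat.le_0_l _)); simpl in Hbid.
    now rewrite Nat.add_0_r in Hbid.
  - left. exists (S l); split; [exact Hl|]; intros r Hr.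
    apply bid_take_marker; [now apply Hbid|]; intros _.
    exact (Hbid 0 (Nat.le_0_l _)).
Qed.

Lemma outcome_bid_zero TB G p :
  some_wins TB (lefts G) p false -> all_win TB (rights G) p true ->
  outcome TB G p true = true.
Proof.
  intros Hleft Hright; apply outcome_true_iff; exists 0; split; [lia|].
  intros [|r] _; simpl; [now rewrite Nat.sub_0_r|].
  intros g Hg; apply (outcome_mono _ g g p); [apply dominates_refl | lia | auto].
Qed.

Definition resource_le (TB : nat) (G H : game) : Prop :=
  forall X p q m m', p <= q -> (m = true -> m' = true) ->
    outcome TB (gadd G X) p m = true -> outcome TB (gadd H X) q m' = true.

Lemma resource_le_intro TB G H :
  dominates H G ->
  (forall X p, outcome TB (gadd G X) p false = true -> outcome TB (gadd H X) p true = true) ->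
  resource_le TB G H.
Proof.
  intros Hdom Hmarker X p q m m' Hpq Hm Hwin.
  destruct m, m'; try discriminate (Hm eq_refl).
  - eapply outcome_mono; [apply dominates_gadd, Hdom | exact Hpq | exact Hwin].
  - apply Hmarker; eapply outcome_mono; [apply dominates_refl | exact Hpq | exact Hwin].
  - eapply outcome_mono; [apply dominates_gadd, Hdom | exact Hpq | exact Hwin].
Qed.

Lemma resource_le_of_left_option TB G H g :
  dominates H G -> In g (lefts H) -> dominates g G -> resource_le TB G H.
Proof.
  intros Hdom Hg Hgdom; apply resource_le_intro; [exact Hdom|]; intros X p Hwin.
  assert (HwinH : outcome TB (gadd H X) p false = true)
    by (eapply outcome_mono; [apply dominates_gadd, Hdom | reflexivity | exact Hwin]).
  destruct (outcome_take_marker TB (gadd H X) p HwinH) as [HwinH' | Hright];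
    [exact HwinH' |].
  apply outcome_bid_zero; [|exact Hright].
  exists (gadd g X); split; [apply in_lefts_gadd; left; now exists g|].
  eapply outcome_mono; [apply dominates_gadd, Hgdom | reflexivity | exact Hwin].
Qed.

Lemma resource_le_of_right_option TB G H g :
  dominates H G -> In g (rights G) -> dominates H g -> resource_le TB G H.
Proof.
  intros Hdom Hg Hgdom; apply resource_le_intro; [exact Hdom|]; intros X p Hwin.
  destruct (outcome_take_marker TB (gadd G X) p Hwin) as [HwinG | Hright].
  - eapply outcome_mono; [apply dominates_gadd, Hdom | reflexivity | exact HwinG].
  - eapply outcome_mono; [apply dominates_gadd, Hgdom | reflexivity |].
    apply Hright, in_rights_gadd; left; now exists g.
Qed.

Lemma game_ge_of_right_options TB G H :
  (forall g, In g (lefts G) -> exists h, In h (lefts H) /\ dominates h g) ->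
  (forall h, In h (rights H) -> resource_le TB G h) ->
  game_ge TB H G.
Proof.
  intros HL HR X p m _; revert p m.
  induction X as [XL XR IHL IHR] using game_ind_in; intros p m Hwin.
  pose proof Hwin as Hbid; rewrite outcome_true_iff in Hbid |- *.
  destruct Hbid as (l & Hl & Hbid); exists l; split; [exact Hl|]; intros r Hr.
  eapply bid_mono; [apply Hbid, Hr | |].
  - intros m' _ (y & [(g & Hg & ->) | (x & Hx & ->)]%in_lefts_gadd & Hy).
    + destruct (HL g Hg) as (h & Hh & Hhg).
      exists (gadd h (Game XL XR)); split; [apply in_lefts_gadd; left; now exists h|].
      eapply outcome_mono; [apply dominates_gadd, Hhg | reflexivity | exact Hy].
    + exists (gadd H x); split; [apply in_lefts_gadd; right; now exists x|].
      now apply IHL.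
  - intros m' Hm Hall y [(h & Hh & ->) | (x & Hx & ->)]%in_rights_gadd.
    + apply (HR h Hh _ p _ m); [lia | exact Hm | exact Hwin].
    + apply IHR; [exact Hx|]; apply Hall, in_rights_gadd; right; now exists x.
Qed.

Lemma game_ge_of_left_options TB G H :
  (forall g, In g (rights G) -> exists h, In h (rights H) /\ dominates g h) ->
  (forall h, In h (lefts H) -> resource_le TB h G) ->
  game_ge TB G H.
Proof.
  intros HR HL X p m _; revert p m.
  induction X as [XL XR IHL IHR] using game_ind_in; intros p m Hwin.
  (* A Left move of [H + X] into [h + X] only shows that [G + X] was already won. *)
  destruct (outcome TB (gadd G (Game XL XR)) p m) eqn:Hlose; [reflexivity|].
  rewrite <- Hlose, outcome_true_iff; rewrite outcome_true_iff in Hwin.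
  destruct Hwin as (l & Hl & Hbid); exists l; split; [exact Hl|]; intros r Hr.
  eapply bid_mono; [apply Hbid, Hr | |].
  - intros m' Hm (y & [(h & Hh & ->) | (x & Hx & ->)]%in_lefts_gadd & Hy).
    + enough (outcome TB (gadd G (Game XL XR)) p m = true) by congruence.
      apply (HL h Hh _ (p - l) _ m'); [lia | exact Hm | exact Hy].
    + exists (gadd G x); split; [apply in_lefts_gadd; right; now exists x|].
      now apply IHL.
  - intros m' _ Hall y [(g & Hg & ->) | (x & Hx & ->)]%in_rights_gadd.
    + destruct (HR g Hg) as (h & Hh & Hgh).
      eapply outcome_mono; [apply dominates_gadd, Hgh | reflexivity |].
      apply Hall, in_rights_gadd; left; now exists h.
    + apply IHR; [exact Hx|]; apply Hall, in_rights_gadd; right; now exists x.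
Qed.

Lemma int_game_of_nat k : int_game (Z.of_nat k) = nat_game k.
Proof. destruct k; simpl; [reflexivity | now rewrite SuccNat2Pos.id_succ]. Qed.

Lemma int_game_opp_nat k : int_game (- Z.of_nat k) = conjg (nat_game k).
Proof. destruct k; simpl; [reflexivity | now rewrite SuccNat2Pos.id_succ]. Qed.

Lemma Z_of_nat_or_opp (n : Z) : exists k, n = Z.of_nat k \/ n = (- Z.of_nat k)%Z.
Proof. exists (Z.to_nat (Z.abs n)); rewrite Z2Nat.id by lia; lia. Qed.

Lemma lefts_int_game n g : In g (lefts (int_game n)) -> g = int_game (n - 1).
Proof.
  destruct (Z_of_nat_or_opp n) as ([|k] & [-> | ->]);
    rewrite ?int_game_of_nat, ?int_game_opp_nat;
    cbn [lefts rights nat_game conjg map In]; try tauto.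
  intros [<-|[]]; rewrite <- int_game_of_nat; f_equal; lia.
Qed.

Lemma rights_int_game n g : In g (rights (int_game n)) -> g = int_game (n + 1).
Proof.
  destruct (Z_of_nat_or_opp n) as ([|k] & [-> | ->]);
    rewrite ?int_game_of_nat, ?int_game_opp_nat;
    cbn [lefts rights nat_game conjg map In]; try tauto.
  intros [<-|[]]; rewrite <- int_game_opp_nat; f_equal; lia.
Qed.

Lemma resource_le_nat_succ TB k : resource_le TB (nat_game k) (nat_game (S k)).
Proof.
  apply (resource_le_of_left_option _ _ _ (nat_game k));
    [apply dominates_nat_succ | now left | apply dominates_refl].
Qed.

Lemma resource_le_conjg_nat_succ TB k :
  resource_le TB (conjg (nat_game (S k))) (conjg (nat_game k)).
Proof.
  apply (resource_le_of_right_option _ _ _ (conjg (nat_game k)));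
    [apply dominates_conjg_nat_succ | now left | apply dominates_refl].
Qed.

Lemma resource_le_int_succ TB n : resource_le TB (int_game n) (int_game (n + 1)).
Proof.
  destruct (Z_of_nat_or_opp n) as ([|k] & [-> | ->]).
  1, 2: apply (resource_le_nat_succ TB 0).
  - replace (Z.of_nat (S k) + 1)%Z with (Z.of_nat (S (S k))) by lia.
    rewrite !int_game_of_nat; apply resource_le_nat_succ.
  - replace (- Z.of_nat (S k) + 1)%Z with (- Z.of_nat k)%Z by lia.
    rewrite !int_game_opp_nat; apply resource_le_conjg_nat_succ.
Qed.

Theorem mainTheorem16 (TB : nat) (n : Z) :
  game_eq TB (int_game n)
    (Game [int_game (n - 1)%Z] [int_game (n + 1)%Z]).
Proof.
  split.
  - apply game_ge_of_left_options; simpl.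
    + intros g Hg; exists (int_game (n + 1)); split; [now left|].
      rewrite (rights_int_game n g Hg); apply dominates_refl.
    + intros h [<-|[]].
      replace (int_game n) with (int_game (n - 1 + 1)) by (f_equal; lia).
      apply resource_le_int_succ.
  - apply game_ge_of_right_options; simpl.
    + intros g Hg; exists (int_game (n - 1)); split; [now left|].
      rewrite (lefts_int_game n g Hg); apply dominates_refl.
    + intros h [<-|[]]; apply resource_le_int_succ.
Qed.
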